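(* Let $\mathcal{E}$ and $\mathcal{F}$ be fusion systems over finite $p$-groups $R$ and $S$, at least one of them saturated, and let $\phi:S\to R$ be a group isomorphism inducing an isomorphism of fusion systems $\mathcal{F}\to\mathcal{E}$. If $Q$ is a fully $\mathcal{F}$-normalized subgroup of $S$ and $P=\phi(Q)$, then $\Delta(P,\phi,Q)=\{(\phi(y),y):y\in Q\}$ is a fully $\mathcal{E}\times\mathcal{F}$-normalized subgroup of $R\times S$.
   Context: $\phi$ induces an isomorphism $\mathcal{F}\to\mathcal{E}$ if $\mathrm{Hom}_\mathcal{E}(\phi(P_1),\phi(P_2))=\phi\circ\mathrm{Hom}_\mathcal{F}(P_1,P_2)\circ\phi^{-1}$ for all $P_1,P_2\le S$. $\mathcal{E}\times\mathcal{F}$ is the fusion system over $R\times S$ in which, for $U,V\le R\times S$, $\mathrm{Hom}_{\mathcal{E}\times\mathcal{F}}(U,V)$ consists of the homomorphisms $U\to V$ of the form $(\psi_1,\psi_2)|_U$ with $\psi_1\in\mathrm{Hom}_\mathcal{E}(p_1(U),p_1(V))$, $\psi_2\in\mathrm{Hom}_\mathcal{F}(p_2(U),p_2(V))$ ($p_i$ the projections). A subgroup is fully normalized in a fusion system if its normalizer has maximal order among all subgroups isomorphic to it in the fusion system. *)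

From HB Require Import structures.
From mathcomp Require Import all_boot all_fingroup all_solvable.
Set Implicit Arguments. Unset Strict Implicit. Unset Printing Implicit Defensive.
Import GroupScope.
Local Open Scope group_scope.

(* Conventions: a morphism of a fusion system over S (S in gT) from P to Q
   is stored as a finite function gT -> gT normalized to be 1 outside P
   (so that Hom_F(P,Q) is a finite set and distinct morphisms are distinct
   finfuns).  A fusion system is given by its Hom-sets:
   F P Q = Hom_F(P,Q) : {set {ffun gT -> gT}}. *)

Section Fusion.
Variable gT : finGroupType.
Implicit Types (S P Q T : {set gT}).

Definition restrf P (f : gT -> gT) : {ffun gT -> gT} :=
  [ffun x => if x \in P then f x else 1].

Definition homsT := {set gT} -> {set gT} -> {set {ffun gT -> gT}}.

Definition is_fusion_system (S : {group gT}) (F : homsT) : Prop :=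
  [/\ (forall P Q (f : {ffun gT -> gT}), f \in F P Q ->
         [/\ group_set P, group_set Q, P \subset S & Q \subset S] /\
         [/\ f = restrf P f, morphic P f, {in P &, injective f}
            & f @: P \subset Q]),
      (forall (P Q : {group gT}) g, P \subset S -> Q \subset S -> g \in S ->
         P :^ g \subset Q -> restrf P (conjg^~ g) \in F P Q),
      (forall P Q T f h, f \in F P Q -> h \in F Q T ->
         restrf P (h \o f) \in F P T)
    & (forall P Q f, f \in F P Q ->
         f \in F P (f @: P) /\
         exists2 h, h \in F (f @: P) P & {in P, forall x, h (f x) = x})].

(* Q' is F-conjugate to Q iff Q' = f(Q) for some f in Hom_F(Q,S). *)
Definition fully_normalized (S : {group gT}) (F : homsT) Q : Prop :=
  Q \subset S /\
  forall f, f \in F Q S -> #|'N_S(f @: Q)| <= #|'N_S(Q)|.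

Definition fully_centralized (S : {group gT}) (F : homsT) Q : Prop :=
  Q \subset S /\
  forall f, f \in F Q S -> #|'C_S(f @: Q)| <= #|'C_S(Q)|.

Definition AutF (F : homsT) P := F P P.
Definition AutS (S : {group gT}) P : {set {ffun gT -> gT}} :=
  [set restrf P (conjg^~ g) | g in 'N_S(P)].

Definition Nphi (S : {group gT}) P (phi : {ffun gT -> gT}) : {set gT} :=
  [set g in 'N_S(P) | [exists h in 'N_S(phi @: P),
                         [forall y in P, phi (y ^ g) == phi y ^ h]]].

(* Saturation (Broto-Levi-Oliver, Def. 1.2). The Sylow condition
   Aut_S(P) in Syl_p(Aut_F(P)) is written out as in pHall:
   Aut_S(P) is a p-group of p'-index in Aut_F(P). *)
Definition saturated (p : nat) (S : {group gT}) (F : homsT) : Prop :=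
  (forall P : {group gT}, fully_normalized S F P ->
     fully_centralized S F P /\
     [/\ AutS S P \subset AutF F P, p.-nat #|AutS S P|
       & p^'.-nat (#|AutF F P| %/ #|AutS S P|)]) /\
  (forall (P : {group gT}) (phi : {ffun gT -> gT}), P \subset S ->
     phi \in F P S -> fully_centralized S F (phi @: P) ->
     exists2 psi, psi \in F (Nphi S P phi) S & {in P, forall y, psi y = phi y}).

End Fusion.

Section Product.
Variables gT1 gT2 : finGroupType.

Definition prod_fusion (E : homsT gT1) (F : homsT gT2) : homsT (gT1 * gT2)%type :=
  fun U V =>
    [set h : {ffun (gT1 * gT2)%type -> (gT1 * gT2)%type} |
       [&& h == restrf U h, h @: U \subset V &
           [exists psi1 in E [set u.1 | u in U] [set v.1 | v in V],
            exists psi2 in F [set u.2 | u in U] [set v.2 | v in V],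
            [forall u in U, h u == (psi1 u.1, psi2 u.2)]]]].

Definition induces_iso (S : {group gT2}) (phi : {morphism S >-> gT1})
   (F : homsT gT2) (E : homsT gT1) : Prop :=
  forall P1 P2 : {group gT2}, P1 \subset S -> P2 \subset S ->
  forall g : {ffun gT1 -> gT1},
    g \in E (phi @* P1) (phi @* P2) <->
    (g = restrf (phi @* P1) g /\
     exists2 f, f \in F P1 P2 & {in P1, forall y, g (phi y) = phi (f y)}).

Definition Delta (S : {group gT2}) (phi : {morphism S >-> gT1}) (Q : {set gT2})
  : {set (gT1 * gT2)%type} := [set (phi y, y) | y in Q].

End Product.

From HB Require Import structures.
From mathcomp Require Import all_boot all_fingroup all_solvable.
Import GroupScope.
Set Implicit Arguments. Unset Strict Implicit. Unset Printing Implicit Defensive.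

(* Write P = phi(Q).  The map (c, s) |-> (c phi(s), s) embeds C_R(P) x N_S(Q)
   into N(Delta).  Conversely a morphism of E x F sends Delta to the graph
   {(psi1(phi y), psi2 y) | y in Q}, whose normalizer has order at most
   |C_R(psi1 P)| |N_S(psi2 Q)|: its elements with trivial second coordinate
   centralize psi1 P.  Now |N_S(psi2 Q)| <= |N_S(Q)| since Q is fully normalized,
   and |C_R(psi1 P)| <= |C_R(P)| since P is fully centralized: by saturation,
   either directly in E or for Q in F and then transported along phi. *)

Lemma conjg_pair (gT1 gT2 : finGroupType) (a c : gT1) (b d : gT2) :
  (a, b) ^ (c, d) = (a ^ c, b ^ d).
Proof. by []. Qed.

Section ProductNormalizers.
Variables (gT1 gT2 : finGroupType) (R : {group gT1}) (S : {group gT2}).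

Lemma imset_fst_setX (A : {set gT1}) : [set v.1 | v in setX A S] = A.
Proof.
apply/setP => x; apply/imsetP/idP => [[[a b] /setXP[Aa _] ->] //| Ax].
by exists (x, 1) => //; apply/setXP.
Qed.

Lemma imset_snd_setX (B : {set gT2}) : [set v.2 | v in setX R B] = B.
Proof.
apply/setP => x; apply/imsetP/idP => [[[a b] /setXP[_ Bb] ->] //| Bx].
by exists (1, x) => //; apply/setXP.
Qed.

Lemma card_norm_graph_le (Q : {set gT2}) (g1 : gT2 -> gT1) (g2 : gT2 -> gT2) :
    {in Q &, injective g2} ->
  #|'N_(setX R S)([set (g1 y, g2 y) | y in Q])|
    <= #|'C_R(g1 @: Q)| * #|'N_S(g2 @: Q)|.
Proof.
move=> inj2; set X := [set _ | _ in _]; set N := 'N_(setX R S)(X).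
have conjX r s y : y \in Q -> (r, s) \in N -> (g1 y ^ r, g2 y ^ s) \in X.
  move=> Qy /setIP[_ NX]; rewrite -conjg_pair memJ_norm //.
  by apply/imsetP; exists y.
have kerN_cent : fst @: (N :&: 'ker (@snd gT1 gT2)) \subset 'C_R(g1 @: Q).
  apply/subsetP => _ /imsetP[[r b] /setIP[Nr /mker /= b1] ->]; subst b.
  rewrite /= inE; have /setIP[/setXP[-> _] _] := Nr.
  apply/centP => _ /imsetP[y Qy ->].
  have /imsetP[z Qz [r_fix yz]] := conjX r 1 y Qy Nr.
  rewrite conjg1 in yz; rewrite (inj2 _ _ Qz Qy (esym yz)) in r_fix.
  by apply/commute_sym/commgP/conjg_fixP.
have snd_norm : snd @* N \subset 'N_S(g2 @: Q).
  rewrite morphimEsub ?subsetT //; apply/subsetP => _ /imsetP[[r s] Nrs ->].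
  have /setIP[/setXP[_ Ss] _] := Nrs; rewrite /= inE Ss inE.
  apply/subsetP => _ /imsetP[_ /imsetP[y Qy ->] ->].
  by have /imsetP[z Qz [_ ->]] := conjX r s y Qy Nrs; apply: imset_f.
have -> : #|N| = (#|N :&: 'ker (@snd gT1 gT2)| * #|snd @* N|)%N.
  by rewrite card_morphim setTI LagrangeI.
apply: leq_mul; last exact: subset_leq_card.
rewrite -(card_in_imset (f := fst)); first exact: subset_leq_card.
by move=> [a b] [c d] /setIP[_ /mker /= ->] /setIP[_ /mker /= ->] /= ->.
Qed.

Variables (phi : {morphism S >-> gT1}) (Q : {set gT2}).
Hypotheses (sSR : phi @* S \subset R) (sQS : Q \subset S).

Lemma Delta_subset_setX : Delta phi Q \subset setX R S.
Proof.
apply/subsetP => _ /imsetP[y Qy ->]; have Sy := subsetP sQS y Qy.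
by apply/setXP; split; rewrite // (subsetP sSR) ?mem_morphim.
Qed.

Lemma card_norm_Delta_ge :
  #|'C_R(phi @* Q)| * #|'N_S(Q)| <= #|'N_(setX R S)(Delta phi Q)|.
Proof.
pose f (u : gT1 * gT2) := (u.1 * phi u.2, u.2).
have injf : injective f.
  by move=> [a b] [c d] /= [ac bd]; subst d; rewrite (mulIg _ _ _ ac).
rewrite -cardsX -(card_imset _ injf); apply: subset_leq_card.
apply/subsetP => _ /imsetP[[c s] /setXP[/setIP[Rc Cc] /setIP[Ss Ns]] ->].
have Rphis : phi s \in R by rewrite (subsetP sSR) ?mem_morphim.
rewrite /f /= inE inE /= Ss andbT groupM //= inE.
apply/subsetP => _ /imsetP[_ /imsetP[y Qy ->] ->].
have Sy := subsetP sQS y Qy.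
have c_fix : phi y ^ c = phi y.
  by apply/conjg_fixP/commgP/commute_sym/(centP Cc); rewrite mem_morphim.
by rewrite conjg_pair conjgM c_fix -morphJ // imset_f // memJ_norm.
Qed.

Variables (E : homsT gT1) (F : homsT gT2).

Lemma prod_fusion_Delta_image h :
    h \in prod_fusion E F (Delta phi Q) (setX R S) ->
  exists2 psi1, psi1 \in E (phi @* Q) R &
  exists2 psi2, psi2 \in F Q S &
    h @: Delta phi Q = [set (psi1 (phi y), psi2 y) | y in Q].
Proof.
have fst_Delta : [set u.1 | u in Delta phi Q] = phi @* Q.
  by rewrite morphimEsub // -imset_comp.
have snd_Delta : [set u.2 | u in Delta phi Q] = Q.
  by rewrite -imset_comp imset_id.
rewrite inE fst_Delta snd_Delta imset_fst_setX imset_snd_setX.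
case/and3P=> _ _ /exists_inP[psi1 psi1E /exists_inP[psi2 psi2F /forall_inP hpsi]].
exists psi1 => //; exists psi2 => //.
rewrite -imset_comp; apply: eq_in_imset => y Qy /=.
by apply/eqP/hpsi; apply: imset_f.
Qed.

End ProductNormalizers.

Section IsomorphicFusionSystems.
Variables (gT1 gT2 : finGroupType) (R : {group gT1}) (S : {group gT2}).
Variables (E : homsT gT1) (F : homsT gT2) (phi : {morphism S >-> gT1}).
Hypotheses (fsF : is_fusion_system S F) (isoP : isom S R phi)
  (phiFE : induces_iso phi F E).

Lemma card_subnorm_isom (X : {set gT2}) :
  X \subset S -> #|'N_R(phi @* X)| = #|'N_S(X)|.
Proof.
have [injphi <-] := isomP isoP.
by move=> sXS; rewrite -injm_subnorm // card_injm // subsetIl.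
Qed.

Lemma card_subcent_isom (X : {set gT2}) :
  X \subset S -> #|'C_R(phi @* X)| = #|'C_S(X)|.
Proof.
have [injphi <-] := isomP isoP.
by move=> sXS; rewrite -injm_subcent // card_injm // subsetIl.
Qed.

Lemma induces_iso_image (Q : {group gT2}) g :
    Q \subset S -> g \in E (phi @* Q) R ->
  exists2 f, f \in F Q S & g @: (phi @* Q) = phi @* (f @: Q) /\ f @: Q \subset S.
Proof.
have [_ imS] := isomP isoP; case: fsF => homF _ _ _.
move=> sQS; rewrite -imS => /(phiFE sQS (subxx S)) [_ [f fF fE]].
have [_ [_ _ _ fQS]] := homF _ _ _ fF.
exists f => //; split => //.
by rewrite !morphimEsub // -!imset_comp; apply: eq_in_imset.
Qed.

Lemma fully_normalized_isom (Q : {group gT2}) :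
  fully_normalized S F Q -> fully_normalized R E (phi @* Q).
Proof.
have [_ imS] := isomP isoP; move=> [sQS fnQ]; split; first by rewrite -imS morphimS.
move=> g /(induces_iso_image sQS) [f fF [-> fQS]].
by rewrite !card_subnorm_isom //; apply: fnQ.
Qed.

Lemma fully_centralized_isom (Q : {group gT2}) :
  fully_centralized S F Q -> fully_centralized R E (phi @* Q).
Proof.
have [_ imS] := isomP isoP; move=> [sQS fcQ]; split; first by rewrite -imS morphimS.
move=> g /(induces_iso_image sQS) [f fF [-> fQS]].
by rewrite !card_subcent_isom //; apply: fcQ.
Qed.

Lemma fully_centralized_isom_saturated p (Q : {group gT2}) :
    saturated p R E \/ saturated p S F ->
  fully_normalized S F Q -> fully_centralized R E (phi @* Q).
Proof.
move=> [[satE _] | [satF _]] fnQ.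
  by have [] := satE (phi @* Q)%G (fully_normalized_isom fnQ).
by apply: fully_centralized_isom; have [] := satF Q fnQ.
Qed.

End IsomorphicFusionSystems.

Theorem lemma2p9 (gT1 gT2 : finGroupType) (p : nat) (R : {group gT1}) (S : {group gT2})
  (E : homsT gT1) (F : homsT gT2) (phi : {morphism S >-> gT1}) (Q : {group gT2}) :
  prime p -> p.-group R -> p.-group S ->
  is_fusion_system R E -> is_fusion_system S F ->
  saturated p R E \/ saturated p S F ->
  isom S R phi -> induces_iso phi F E ->
  fully_normalized S F Q ->
  fully_normalized (setX R S) (prod_fusion E F) (Delta phi Q).
Proof.
move=> _ _ _ _ fsF sat isoP phiFE fnQ; have [sQS fnQ_le] := fnQ.
have sSR : phi @* S \subset R by case/isomP: isoP => _ ->.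
split; first exact: Delta_subset_setX.
move=> h /(prod_fusion_Delta_image sQS) [psi1 psi1E [psi2 psi2F ->]].
have [homF _ _ _] := fsF; have [_ [_ _ inj2 _]] := homF _ _ _ psi2F.
apply: leq_trans (card_norm_graph_le R S _ inj2) _.
apply: leq_trans (card_norm_Delta_ge sSR sQS); apply: leq_mul; last exact: fnQ_le.
have [_ fcP] := fully_centralized_isom_saturated fsF isoP phiFE sat fnQ.
have -> : [set psi1 (phi y) | y in Q] = psi1 @: (phi @* Q).
  by rewrite morphimEsub // -imset_comp.
exact: fcP.
Qed.
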